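(* Let $\Sigma\subseteq\mathcal A^{\mathbf N}$ be a one-sided subshift over a finite alphabet $\mathcal A$ that has a finite subset $F$ with dense orbit. If the complexity function $p$ of the language of $\Sigma$ is unbounded, then this language is almost prolongable.
   Context: $\Sigma$ is closed and invariant under the shift $S$. $F\subseteq\Sigma$ has dense orbit if $\bigcup_{\omega\in F}\{S^m\omega:m\ge0\}$ is dense in $\Sigma$. The language of $\Sigma$ is the set of finite words occurring as subwords of elements of $\Sigma$; $p(n)$ is the number of its words of length $n$. A word $v$ of a language $\mathcal L$ is left-prolongable (resp. right-prolongable) if $av\in\mathcal L$ (resp. $va\in\mathcal L$) for some letter $a$; $\mathcal L$ is almost prolongable if the proportions of left-prolongable and of right-prolongable words among its words of length $n$ both tend to $1$ as $n\to\infty$. *)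

From HB Require Import structures.
From mathcomp Require Import all_boot all_order all_algebra.
From mathcomp Require Import all_classical all_reals all_analysis.
Set Implicit Arguments. Unset Strict Implicit. Unset Printing Implicit Defensive.
Import Order.TTheory GRing.Theory Num.Theory.
Import numFieldNormedType.Exports.
Local Open Scope classical_set_scope.

Definition shift (A : Type) (w : nat -> A) : nat -> A := fun n => w n.+1.

Definition shift_invariant (A : Type) (Sigma : set (nat -> A)) : Prop :=
  forall w, Sigma w -> Sigma (shift w).

(* Closedness in the product topology of A^N (A discrete): the basic open
   sets are the cylinders [w_0 ... w_{n-1}], so Sigma is closed iff every
   point all of whose cylinder neighbourhoods meet Sigma lies in Sigma. *)
Definition cyl_closed (A : Type) (Sigma : set (nat -> A)) : Prop :=
  forall w : nat -> A,
    (forall n, exists2 s, Sigma s & forall i, (i < n)%N -> s i = w i) ->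
    Sigma w.

(* F has dense orbit in Sigma: the union of the forward orbits of the
   elements of F meets every nonempty (cylinder) open subset of Sigma. *)
Definition dense_orbit (A : Type) (Sigma F : set (nat -> A)) : Prop :=
  forall w, Sigma w -> forall n : nat,
    exists2 f, F f & exists m : nat,
      forall i, (i < n)%N -> iter m (@shift A) f i = w i.

Definition in_language (A : Type) (Sigma : set (nat -> A)) (v : seq A) : Prop :=
  exists2 w, Sigma w & exists i : nat, v = [seq w (i + j)%N | j <- iota 0 (size v)].

Definition complexity (A : finType) (Sigma : set (nat -> A)) (n : nat) : nat :=
  #|[set v : n.-tuple A | `[< in_language Sigma v >]]|.

Definition left_prolongable (A : Type) (Sigma : set (nat -> A)) (v : seq A) : Prop :=
  exists a : A, in_language Sigma (a :: v).

Definition right_prolongable (A : Type) (Sigma : set (nat -> A)) (v : seq A) : Prop :=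
  exists a : A, in_language Sigma (rcons v a).

Definition n_left_prol (A : finType) (Sigma : set (nat -> A)) (n : nat) : nat :=
  #|[set v : n.-tuple A | `[< in_language Sigma v /\ left_prolongable Sigma v >]]|.

Definition n_right_prol (A : finType) (Sigma : set (nat -> A)) (n : nat) : nat :=
  #|[set v : n.-tuple A | `[< in_language Sigma v /\ right_prolongable Sigma v >]]|.

Definition almost_prolongable (R : realType) (A : finType) (Sigma : set (nat -> A)) : Prop :=
  (fun n : nat => ((n_left_prol Sigma n)%:R / (complexity Sigma n)%:R : R)%R)
     @ \oo --> (1%R : R) /\
  (fun n : nat => ((n_right_prol Sigma n)%:R / (complexity Sigma n)%:R : R)%R)
     @ \oo --> (1%R : R).

(* A word of the language that is not left-prolongable can only occur at the
   very beginning of a point of Sigma.  By density of the orbit of F, that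
   prefix is also read in some f in F at some time m; m = 0, since otherwise
   f exhibits a left extension.  So every non-left-prolongable word of length
   n is a prefix of an element of F, whence p(n) - #left(n) <= #F, while every
   word is trivially right-prolongable in a one-sided shift.  As p is
   nondecreasing and unbounded it tends to infinity, so both ratios tend to 1. *)
From Pilot Require Import Defs.
From HB Require Import structures.
From mathcomp Require Import all_boot all_order all_algebra.
From mathcomp Require Import all_classical all_reals all_analysis.
Set Implicit Arguments.
Unset Strict Implicit.
Unset Printing Implicit Defensive.
Import Order.TTheory GRing.Theory Num.Theory.
Import numFieldNormedType.Exports.
Local Open Scope classical_set_scope.

Section Language.
Variables (A : finType) (Sigma : set (nat -> A)).

Definition subword (w : nat -> A) (i n : nat) : n.-tuple A :=
  [tuple w (i + j) | j < n].

Lemma val_subword w i n :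
  val (subword w i n) = [seq w (i + j) | j <- iota 0 n].
Proof. by rewrite /= -val_enum_ord -map_comp -val_ord_tuple. Qed.

Lemma in_languageP n (t : n.-tuple A) :
  in_language Sigma t <-> exists2 w, Sigma w & exists i, t = subword w i n.
Proof.
split=> [[w Sw [i wt]] | [w Sw [i ->]]]; exists w => //; exists i.
  by apply: val_inj; move: wt; rewrite size_tuple val_subword.
by rewrite size_tuple val_subword.
Qed.

Lemma left_prolongable_subword w i n :
  Sigma w -> left_prolongable Sigma (subword w i.+1 n).
Proof.
move=> Sw; exists (w i); exists w => //; exists i.
have -> : w i :: subword w i.+1 n = subword w i n.+1 :> seq A.
  rewrite !val_subword /= addn0 -[iota 1 n]/(iota (1 + 0) n) iotaDl -map_comp.
  by congr (_ :: _); apply: eq_map => j /=; rewrite addnA addn1.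
by rewrite size_tuple val_subword.
Qed.

Lemma in_language_right_prolongable (v : seq A) :
  in_language Sigma v -> right_prolongable Sigma v.
Proof.
move=> [w Sw [i wv]]; exists (w (i + size v)); exists w => //; exists i.
by rewrite size_rcons -cats1 {1}wv -addn1 iotaD map_cat.
Qed.

Lemma n_left_prol_le_complexity n : (n_left_prol Sigma n <= complexity Sigma n)%N.
Proof.
apply/subset_leq_card/fintype.subsetP => t.
by rewrite !inE => /asboolP[Lt _]; apply/asboolP.
Qed.

Lemma n_right_prol_complexity n : n_right_prol Sigma n = complexity Sigma n.
Proof.
rewrite /n_right_prol /complexity; apply: eq_card => t.
apply/idP/idP => /set_mem/asboolP Lt; apply/mem_set/asboolP; first by case: Lt.
by split; last exact: in_language_right_prolongable.
Qed.

Lemma complexity_homo : {homo complexity Sigma : n m / (n <= m)%N}.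
Proof.
move=> n m le_nm.
pose prefix (t : m.-tuple A) : n.-tuple A :=
  [tuple tnth t (widen_ord le_nm j) | j < n].
apply: leq_trans (leq_imset_card prefix _).
apply/subset_leq_card/fintype.subsetP => t; rewrite inE => /asboolP/in_languageP.
move=> [w Sw [i ->]]; apply/imsetP; exists (subword w i m).
  by rewrite inE; apply/asboolP/in_languageP; exists w => //; exists i.
by apply: eq_from_tnth => j; rewrite !tnth_mktuple.
Qed.

Lemma iter_shift m (f : nat -> A) (j : nat) :
  iter m (@Defs.shift A) f j = f (m + j)%N.
Proof. by elim: m j => [|m IH] j //=; rewrite /Defs.shift IH addSnnS. Qed.

Variable F : set (nat -> A).
Hypotheses (sub_F_Sigma : F `<=` Sigma) (dense_F : dense_orbit Sigma F).

Lemma not_left_prolongable_prefix n (t : n.-tuple A) :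
  in_language Sigma t -> ~ left_prolongable Sigma t ->
  exists2 f, F f & t = subword f 0 n.
Proof.
move=> /in_languageP[w Sw [[|i] ->{t}] not_lp]; last first.
  by have := left_prolongable_subword i n Sw.
have [f Ff [m fw]] := dense_F Sw n.
have wf : subword w 0 n = subword f m n.
  by apply: eq_from_tnth => j; rewrite !tnth_mktuple add0n -fw // iter_shift.
rewrite wf in not_lp *; case: m {fw wf} not_lp => [|m] not_lp; first by exists f.
by have := left_prolongable_subword m n (sub_F_Sigma Ff).
Qed.

Lemma complexity_le_n_left_prol (s : seq (nat -> A)) n :
  F `<=` [set f | f \in s] -> (complexity Sigma n <= n_left_prol Sigma n + size s)%N.
Proof.
move=> Fs; rewrite /complexity /n_left_prol -(size_map (fun f => subword f 0 n) s).
apply: leq_trans (leq_add (leqnn _) (card_size _)); rewrite -cardUI.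
apply: leq_trans (leq_addr _ _); apply/subset_leq_card/fintype.subsetP => t.
move=> /set_mem/asboolP Lt; rewrite inE; apply/orP.
have [lp | not_lp] := pselect (left_prolongable Sigma t).
  by left; apply/mem_set/asboolP.
have [f Ff ->] := not_left_prolongable_prefix Lt not_lp.
by right; apply: map_f; apply: Fs Ff.
Qed.

End Language.

Lemma homo_unbounded_eventually (b : nat -> nat) :
  {homo b : n m / (n <= m)%N} -> (forall M, exists n, (M < b n)%N) ->
  forall M, exists N, forall n, (N <= n)%N -> (M < b n)%N.
Proof.
move=> b_homo b_unb M; have [N MbN] := b_unb M.
by exists N => n /b_homo/(leq_trans MbN).
Qed.

Section RatioLimit.
Local Open Scope ring_scope.

Lemma cvg_ratio_bounded_gap (R : realType) (a b : nat -> nat) (K : nat) :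
  (forall n, (a n <= b n)%N) -> (forall n, (b n <= a n + K)%N) ->
  (forall M, exists N, forall n, (N <= n)%N -> (M < b n)%N) ->
  (fun n => (a n)%:R / (b n)%:R : R) @ \oo --> (1 : R).
Proof.
move=> le_ab le_ba b_cvg; apply/cvgrPdist_le => e e_gt0.
have Ke_ge0 : 0 <= K%:R / e :> R by rewrite divr_ge0 // ltW.
have [N Nb] := b_cvg (Num.Def.archi_bound (K%:R / e)).
exists N => // n /= /Nb bn_big.
have Ke_lt_b : K%:R / e < (b n)%:R :> R.
  by apply: lt_trans (archi_boundP Ke_ge0) _; rewrite ltr_nat.
have b_gt0 : 0 < (b n)%:R :> R by apply: le_lt_trans Ke_lt_b.
rewrite -{1}(divff (lt0r_neq0 b_gt0)) -mulrBl -natrB ?le_ab //.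
rewrite ger0_norm ?divr_ge0 ?ler0n // ler_pdivrMr //.
apply: (@le_trans _ _ K%:R); first by rewrite ler_nat leq_subLR.
by rewrite mulrC -ler_pdivrMr //; apply: ltW.
Qed.

End RatioLimit.

Theorem proposition2p14 (R : realType) (A : finType) (Sigma F : set (nat -> A)) :
  cyl_closed Sigma -> shift_invariant Sigma ->
  F `<=` Sigma -> finite_set F -> dense_orbit Sigma F ->
  (forall M : nat, exists n : nat, (M < complexity Sigma n)%N) ->
  almost_prolongable R Sigma.
Proof.
move=> _ _ FSigma /finite_seqP[s Fs] dense_F p_unb.
have p_cvg := homo_unbounded_eventually (@complexity_homo A Sigma) p_unb.
split.
  apply: (@cvg_ratio_bounded_gap R _ _ (size s) _ _ p_cvg).
    exact: n_left_prol_le_complexity.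
  by move=> n; apply: (complexity_le_n_left_prol FSigma dense_F n); rewrite Fs.
by apply: (@cvg_ratio_bounded_gap R _ _ 0 _ _ p_cvg) => n;
  rewrite n_right_prol_complexity ?addn0.
Qed.
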